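(* For every permutation graph $G$, $\operatorname{box}(G)\le 2\Delta(G)+1$, where $\Delta(G)$ is the maximum degree of $G$.
   Context: For a permutation $\pi$ of $\{1,\dots,n\}$, the graph $G[\pi]$ has vertex set $\{1,\dots,n\}$ and an edge $ij$ iff $(i-j)(\pi^{-1}(i)-\pi^{-1}(j))<0$. A graph is a permutation graph if it is isomorphic to $G[\pi]$ for some permutation $\pi$. The boxicity $\operatorname{box}(G)$ is the minimum $b$ such that $G$ is the intersection graph of axis-parallel boxes in $\mathbb{R}^b$ (products of $b$ closed intervals), one box per vertex. *)

From HB Require Import structures.
From mathcomp Require Import all_boot all_order all_algebra all_fingroup.
From Stdlib Require Import Rdefinitions.
From mathcomp Require Import Rstruct.
Set Implicit Arguments. Unset Strict Implicit. Unset Printing Implicit Defensive.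
Import Order.TTheory GRing.Theory Num.Theory.
Local Open Scope ring_scope.

(* Edge relation of G[pi] on vertex set 'I_n (0-indexed version of {1..n}):
   i ~ j iff (i - j)(pi^-1 i - pi^-1 j) < 0, i.e. i <> j and the order of i,j
   is reversed by pi^-1. *)
Definition perm_edge (n : nat) (pi : 'S_n) : rel 'I_n :=
  fun i j => (i != j) && (ltn i j != ltn ((pi^-1)%g i) ((pi^-1)%g j)).

Definition is_permutation_graph (V : finType) (adj : rel V) : Prop :=
  exists n (pi : 'S_n) (f : V -> 'I_n),
    bijective f /\ forall u v, adj u v = perm_edge pi (f u) (f v).

Definition degree (V : finType) (adj : rel V) (v : V) : nat := #|[set w | adj v w]|.
Definition max_degree (V : finType) (adj : rel V) : nat := \max_(v : V) degree adj v.

Definition box (b : nat) := 'I_b -> (Rdefinitions.R * Rdefinitions.R).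
Definition box_ok (b : nat) (B : box b) : Prop := forall k, ((B k).1 <= (B k).2).
Definition boxes_meet (b : nat) (B1 B2 : box b) : bool :=
  [forall k, ((B1 k).1 <= (B2 k).2) && ((B2 k).1 <= (B1 k).2)].

Definition box_representable (V : finType) (adj : rel V) (b : nat) : Prop :=
  exists B : V -> box b, (forall v, box_ok (B v)) /\
    forall u v, u != v -> (adj u v <-> boxes_meet (B u) (B v)).

Definition boxicity_le (V : finType) (adj : rel V) (k : nat) : Prop :=
  exists b, leq b k /\ box_representable adj b.

From mathcomp Require Import all_boot all_algebra all_fingroup zify Rstruct.
Set Implicit Arguments. Unset Strict Implicit. Unset Printing Implicit Defensive.
Import Num.Theory.

(* Order the vertices of G[pi] by position.  The order is umbrella-free: an
   edge uv of G[pi] is an inverted pair, so any w strictly between u and v is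
   inverted with one of them.  Hence the vertices at positions in (u, v] are
   neighbours of u or of v, and edges span fewer than M = 2 Delta + 1
   positions.  For each residue c mod M, declaring the vertices at positions
   congruent to c boundary vertices separating consecutive blocks yields an
   interval supergraph of G in which a boundary vertex is a point meeting
   exactly its neighbours.  A non-edge uv is thus missing in the coordinate
   where u is a boundary vertex, so G is the intersection of these M interval
   graphs. *)

Definition umbrella_free (V : finType) (adj : rel V) (pos : V -> nat) :=
  forall u w v, pos u < pos w < pos v -> adj u v -> adj u w || adj w v.

Section PermutationGraph.
Variables (n : nat) (pi : 'S_n).

Lemma perm_edge_sym : symmetric (perm_edge pi).
Proof.
move=> i j; rewrite /perm_edge eq_sym; case: eqVneq => //= ne.
have ne' : (pi^-1)%g i != (pi^-1)%g j by rewrite (inj_eq perm_inj) eq_sym.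
move: ne ne'; rewrite -!val_eqE /=.
by case: (ltngtP i j); case: (ltngtP ((pi^-1)%g i) ((pi^-1)%g j)).
Qed.

Lemma perm_edge_umbrella_free : umbrella_free (perm_edge pi) val.
Proof.
move=> i k j /andP[ik kj]; have ij := ltn_trans ik kj.
rewrite /perm_edge -!val_eqE /= !ltn_eqF // ik kj ij /= -negb_and.
by apply: contra => /andP[]; apply: ltn_trans.
Qed.

End PermutationGraph.

Lemma degree_le_max_degree (V : finType) (adj : rel V) v :
  degree adj v <= max_degree adj.
Proof. exact: leq_bigmax. Qed.

Section UmbrellaFreeOrdering.
Variables (V : finType) (adj : rel V) (pos : V -> nat).
Hypothesis adj_sym : symmetric adj.
Hypothesis pos_inj : injective pos.
Hypothesis pos_downclosed : forall v x, x < pos v -> exists w, pos w = x.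
Hypothesis adj_umbrella : umbrella_free adj pos.

Let N (u : V) := [set w | adj u w].

Lemma card_pos_between u v :
  pos v - pos u <= #|[set w | pos u < pos w <= pos v]|.
Proof.
rewrite -(size_image pos) -(size_iota (pos u).+1 (pos v - pos u)).
apply: uniq_leq_size (iota_uniq _ _) _ => x; rewrite mem_iota => /andP[ux xv].
have [w wx] : exists w, pos w = x.
  by case: (ltngtP x (pos v)) => [/pos_downclosed //|| ->]; [lia | exists v].
by rewrite -wx image_f // inE; lia.
Qed.

Lemma pos_between_sub_neighbours u v : adj u v ->
  [set w | pos u < pos w <= pos v] \subset N u :|: N v.
Proof.
move=> uv; apply/subsetP => w; rewrite !inE => /andP[uw].
rewrite leq_eqVlt => /orP[/eqP/pos_inj -> | wv]; first by rewrite uv.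
by rewrite (adj_sym v); apply: adj_umbrella => //; rewrite uw.
Qed.

Lemma adj_pos_le u v : adj u v -> pos v <= pos u + 2 * max_degree adj.
Proof.
move=> uv; have := card_pos_between u v.
have := subset_leq_card (pos_between_sub_neighbours uv).
have := (leq_card_setU (N u) (N v)).1.
have := degree_le_max_degree adj u; have := degree_le_max_degree adj v.
rewrite /degree -/(N u) -/(N v); lia.
Qed.

Section IntervalCoordinates.
Variable M : nat.
Hypothesis M_gt0 : 0 < M.
Hypothesis adj_pos_lt : forall u v, adj u v -> pos v < pos u + M.

(* In coordinate c the vertices at positions congruent to c mod M are the
   boundary vertices; their slots are the multiples of M.  On the doubled
   line, the boundary vertex of level t is the point 2t+2 and every other
   vertex of level t covers 2t+3; it reaches down to 2t+1, resp. up to 2t+5,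
   iff it is adjacent to the boundary vertex of its own, resp. the next,
   level. *)
Definition slot (c : nat) (u : V) : nat := pos u + (M - c).
Definition level (c : nat) (u : V) : nat := slot c u %/ M.
Definition on_boundary (c : nat) (u : V) : bool := M %| slot c u.
Definition touches (c : nat) (u : V) (t : nat) : bool :=
  [exists w, (slot c w == t * M) && adj u w].

Definition lo (c : nat) (u : V) : nat :=
  if on_boundary c u then 2 * level c u + 2
  else if touches c u (level c u) then 2 * level c u + 1 else 2 * level c u + 3.
Definition hi (c : nat) (u : V) : nat :=
  if on_boundary c u then 2 * level c u + 2
  else if touches c u (level c u).+1 then 2 * level c u + 5 else 2 * level c u + 3.

Lemma lo_le_hi c u : lo c u <= hi c u.
Proof. by rewrite /lo /hi; do ![case: ifP => _]; lia. Qed.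

Lemma slot_inj c : injective (slot c).
Proof. by move=> u v /addIn /pos_inj. Qed.

Lemma slot_lt c u v : (slot c u < slot c v) = (pos u < pos v).
Proof. exact: ltn_add2r. Qed.

Lemma level_bounds c u : level c u * M <= slot c u < level c u * M + M.
Proof.
by rewrite /level; have := divn_eq (slot c u) M; have := ltn_pmod (slot c u) M_gt0; lia.
Qed.

Lemma on_boundaryE c u : on_boundary c u = (slot c u == level c u * M).
Proof. by rewrite /on_boundary dvdn_eq eq_sym. Qed.

Lemma touches_boundary c u v : on_boundary c v -> touches c u (level c v) = adj u v.
Proof.
rewrite on_boundaryE => /eqP vM; apply/existsP/idP => [[w /andP[/eqP wM uw]] | uv].
  by rewrite -(slot_inj (etrans wM (esym vM))).
by exists v; rewrite vM eqxx.
Qed.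

Lemma touches_between c u v t :
  slot c v < t * M < slot c u -> adj v u -> touches c v t || touches c u t.
Proof.
move=> /andP[vt tu] vu.
have [w wx] : exists w, pos w = t * M - (M - c).
  by apply: (pos_downclosed (v := u)); move: vt tu; rewrite /slot; lia.
have wt : slot c w = t * M by move: vt; rewrite /slot wx; lia.
have : adj v w || adj w u.
  by apply: adj_umbrella vu; move: vt tu; rewrite -wt !slot_lt => -> ->.
case/orP => [vw | wu]; apply/orP; [left | right]; apply/existsP; exists w.
  by rewrite wt eqxx.
by rewrite wt eqxx adj_sym.
Qed.

Lemma level_le c u v : pos u <= pos v -> level c u <= level c v.
Proof. by move=> uv; apply: leq_div2r; rewrite leq_add2r. Qed.

Lemma level_adj_cases c u v : adj u v -> pos v < pos u ->
  level c u = level c v \/ level c u = (level c v).+1.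
Proof.
move=> uv vu; have le := level_le c (ltnW vu).
suff: level c u <= (level c v).+1 by lia.
rewrite -addn1 /level -divnDMl // mul1n; apply: leq_div2r.
by rewrite adj_sym in uv; have := adj_pos_lt uv; rewrite /slot; lia.
Qed.

Lemma lo_le_hi_of_lt c u v : pos u < pos v -> lo c u <= hi c v.
Proof.
move=> uv; have := level_le c (ltnW uv); rewrite leq_eqVlt => /orP[/eqP same | lt].
  have vnb : ~~ on_boundary c v.
    rewrite on_boundaryE -same; rewrite -(slot_lt c) in uv.
    by have := level_bounds c u; lia.
  by rewrite /lo /hi (negbTE vnb) -same; do ![case: ifP => _]; lia.
by rewrite /lo /hi; do ![case: ifP => _]; lia.
Qed.

Lemma lo_le_hi_of_adj_gt c u v : adj u v -> pos v < pos u -> lo c u <= hi c v.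
Proof.
move=> uv vu; have vu_slot : slot c v < slot c u < slot c v + M.
  by rewrite adj_sym in uv; have := adj_pos_lt uv; rewrite !slot_lt /slot; lia.
have bu := level_bounds c u; have bv := level_bounds c v.
case: (level_adj_cases c uv vu) => tu.
  have unb : ~~ on_boundary c u by rewrite on_boundaryE tu; lia.
  rewrite /lo /hi (negbTE unb) tu; case vb: (on_boundary c v).
    by rewrite touches_boundary // uv; lia.
  by do ![case: ifP => _]; lia.
rewrite tu mulSn in bu.
have vnb : ~~ on_boundary c v by rewrite on_boundaryE; lia.
rewrite /lo /hi (negbTE vnb) -tu; case ub: (on_boundary c u).
  by rewrite touches_boundary // adj_sym uv; lia.
have /orP[t | t] : touches c v (level c u) || touches c u (level c u).
  by apply: touches_between; [move: ub; rewrite on_boundaryE tu mulSn; lia | rewrite adj_sym].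
all: by rewrite t; do ![case: ifP => _]; lia.
Qed.

Lemma lo_le_hi_of_adj c u v : adj u v -> lo c u <= hi c v.
Proof.
move=> uv; case: (ltngtP (pos u) (pos v)) => [|vu|/pos_inj <-].
- exact: lo_le_hi_of_lt.
- exact: lo_le_hi_of_adj_gt.
- exact: lo_le_hi.
Qed.

Lemma adj_of_boundary_meet c u v : on_boundary c u -> u != v ->
  lo c u <= hi c v -> lo c v <= hi c u -> adj u v.
Proof.
move=> ub neq; rewrite adj_sym -(touches_boundary _ ub) /lo /hi ub.
case vb: (on_boundary c v).
  move=> h1 h2; case/eqP: neq; apply: (@slot_inj c).
  by move: ub vb; rewrite !on_boundaryE => /eqP -> /eqP ->; congr (_ * _); lia.
case: ifP => t1; case: ifP => t2 => h1 h2.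
all: have [e|e] : level c u = level c v \/ level c u = (level c v).+1 by lia.
all: by rewrite e //; lia.
Qed.

Lemma on_boundary_mod u : on_boundary (pos u %% M) u.
Proof.
rewrite /on_boundary; have -> : slot (pos u %% M) u = (pos u %/ M).+1 * M.
  by rewrite /slot mulSn; have := divn_eq (pos u) M; have := ltn_pmod (pos u) M_gt0; lia.
exact: dvdn_mull.
Qed.

Local Open Scope ring_scope.

Lemma umbrella_free_box_representable : box_representable adj M.
Proof.
exists (fun v (c : 'I_M) => ((lo c v)%:R, (hi c v)%:R)); split.
  by move=> v c; rewrite /box_ok /= ler_nat lo_le_hi.
move=> u v neq; split => [uv | /forallP meet].
  by apply/forallP => c /=; rewrite !ler_nat !lo_le_hi_of_adj // adj_sym.
have /andP[] := meet (Ordinal (ltn_pmod (pos u) M_gt0)); rewrite /= !ler_nat.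
exact: adj_of_boundary_meet (on_boundary_mod u) neq.
Qed.

End IntervalCoordinates.

End UmbrellaFreeOrdering.

Theorem theorem9 (V : finType) (adj : rel V) :
  is_permutation_graph adj -> boxicity_le adj (2 * max_degree adj + 1).
Proof.
case=> n [pi [f [f_bij adjE]]]; pose pos u := val (f u).
have adj_sym : symmetric adj by move=> u v; rewrite !adjE perm_edge_sym.
have pos_inj : injective pos by move=> u v /val_inj /(bij_inj f_bij).
have pos_downclosed v x : x < pos v -> exists w, pos w = x.
  case: f_bij => g _ gK xv; have x_lt_n := ltn_trans xv (ltn_ord (f v)).
  by exists (g (Ordinal x_lt_n)); rewrite /pos gK.
have adj_umbrella : umbrella_free adj pos.
  by move=> u w v uwv; rewrite !adjE; apply: perm_edge_umbrella_free.
have bandwidth u v : adj u v -> pos v < pos u + (2 * max_degree adj + 1).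
  by rewrite addnA addn1 ltnS; apply: adj_pos_le.
exists (2 * max_degree adj + 1); split => //.
have M_gt0 : 0 < 2 * max_degree adj + 1 by rewrite addn1.
exact: (umbrella_free_box_representable
          adj_sym pos_inj pos_downclosed adj_umbrella M_gt0 bandwidth).
Qed.
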